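(* Every Bézout ring $R$ whose space of minimal prime ideals $\mathrm{MinSpec}(R)$ (with the Zariski topology) is compact is an Hermite ring.
   Context: All rings are commutative with identity. $R$ is Bézout if every finitely generated ideal is principal. $R$ is Hermite if for every $a,b\in R$ there exist $d,a',b'\in R$ with $a=da'$, $b=db'$ and $Ra'+Rb'=R$. *)

From HB Require Import structures.
From mathcomp Require Import all_boot all_algebra.
Set Implicit Arguments. Unset Strict Implicit. Unset Printing Implicit Defensive.
Import GRing.Theory.
Local Open Scope ring_scope.

Section Defs.
Variable R : comPzRingType.

Definition is_ideal (I : R -> Prop) : Prop :=
  [/\ I 0, (forall x y, I x -> I y -> I (x + y)) & (forall r x, I x -> I (r * x))].

Definition is_prime_ideal (P : R -> Prop) : Prop :=
  [/\ is_ideal P, ~ P 1 & (forall a b, P (a * b) -> P a \/ P b)].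

Definition is_minimal_prime (P : R -> Prop) : Prop :=
  is_prime_ideal P /\
  (forall Q : R -> Prop, is_prime_ideal Q -> (forall x, Q x -> P x) ->
     forall x, P x -> Q x).

Definition fg_ideal (s : seq R) (x : R) : Prop :=
  exists c : 'I_(size s) -> R, x = \sum_(i < size s) c i * s`_i.

Definition principal_ideal (d : R) (x : R) : Prop := exists r : R, x = r * d.

Definition Bezout_ring : Prop :=
  forall s : seq R, exists d : R, forall x, fg_ideal s x <-> principal_ideal d x.

Definition Hermite_ring : Prop :=
  forall a b : R, exists d a' b' : R,
    [/\ a = d * a', b = d * b' & forall x, fg_ideal [:: a'; b'] x].

(* Zariski topology on MinSpec R: open sets are MinSpec \ V(S) for S a subset of R *)
Definition minspec_open (U : (R -> Prop) -> Prop) : Prop :=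
  exists S : R -> Prop, forall P,
    U P <-> (is_minimal_prime P /\ exists a, S a /\ ~ P a).

Definition minspec_compact : Prop :=
  forall (I : Type) (U : I -> (R -> Prop) -> Prop),
    (forall i, minspec_open (U i)) ->
    (forall P, is_minimal_prime P -> exists i, U i P) ->
    exists (n : nat) (F : nat -> I), forall P, is_minimal_prime P ->
      exists2 k, (k < n)%N & U (F k) P.
End Defs.

(* Write (a, b) = (d) with d = u a + v b, a = a1 d, b = b1 d, and put
   t = 1 - a1 u - b1 v, so that t d = 0.  Compactness of MinSpec R and the
   Bezout property give g with g u^N = 0 lying outside every minimal prime
   that contains u; then x = u + t g still satisfies x a + v b = d, and no
   minimal prime contains both x and v.  If (x, v) = (h) with x = x0 h and
   v = y0 h, the element 1 - (rho x0 + sig y0) kills h, hence lies in every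
   minimal prime and is nilpotent, so x0 and y0 are comaximal.  Finally
   d0 = x0 a + y0 b divides a and b (as d = h d0), and a, b factor through d0
   with comaximal cofactors. *)

From mathcomp Require Import all_boot all_algebra.
From mathcomp Require Import boolp classical_sets.
From mathcomp Require Import ring.
Set Implicit Arguments. Unset Strict Implicit. Unset Printing Implicit Defensive.
Import GRing.Theory.
Local Open Scope ring_scope.
Local Open Scope classical_set_scope.

Lemma Zorn_bigcup_nonempty (T : Type) (P : set (set T)) (A0 : set T) :
  P A0 ->
  (forall F : set (set T), F `<=` P -> total_on F subset -> F !=set0 ->
     P (\bigcup_(X in F) X)) ->
  exists A, P A /\ forall B, A `<` B -> ~ P B.
Proof.
move=> PA0 chainP.
pose P' := [set A | A = set0 \/ P A].
have chainP' F : F `<=` P' -> total_on F subset -> P' (\bigcup_(X in F) X).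
  move=> FP Ftot; have [neF|emF] := pselect ((F `&` P) !=set0).
    right; have -> : \bigcup_(X in F) X = \bigcup_(X in F `&` P) X.
      apply/seteqP; split=> x [X FX Xx]; last by exists X => //; case: FX.
      by case: (FP X FX) => [E|PX]; [rewrite E in Xx | exists X].
    apply: chainP => //.
    by move=> X Y [FX _] [FY _]; exact: Ftot.
  left; apply/seteqP; split=> x // [X FX Xx]; apply: emF; exists X; split=> //.
  by case: (FP X FX) => // E; rewrite E in Xx.
have [A [A0P Amax]] := Zorn_bigcup chainP'.
have PA : P A.
  case: A0P => // A0E; have [E|neA0] := pselect (A0 = set0).
    by rewrite A0E -E.
  have /set0P[a A0a] : A0 != set0 by apply/eqP.
  exfalso; apply: (Amax A0); last by right.
  by rewrite A0E; split=> // /(_ a A0a).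
by exists A; split=> // B AB PB; apply: (Amax B AB); right.
Qed.

Section Ideals.
Variable R : comPzRingType.
Implicit Types (I P Q : set R) (a b r s u v x y z : R).

Lemma ideal0 I : is_ideal I -> I 0.
Proof. by case. Qed.

Lemma idealD I x y : is_ideal I -> I x -> I y -> I (x + y).
Proof. by case=> _ + _; apply. Qed.

Lemma idealMl I r x : is_ideal I -> I x -> I (r * x).
Proof. by case=> _ _; apply. Qed.

Lemma idealMr I r x : is_ideal I -> I x -> I (x * r).
Proof. by rewrite mulrC; apply: idealMl. Qed.

Lemma idealB I x y : is_ideal I -> I x -> I y -> I (x - y).
Proof. by move=> Iid Ix Iy; rewrite -mulN1r; apply: idealD => //; apply: idealMl. Qed.

Lemma prime_idealX P x n : is_prime_ideal P -> P (x ^+ n) -> P x.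
Proof.
case=> _ P'1 Pprime; elim: n => [|n IHn]; first by rewrite expr0 => /P'1.
by rewrite exprS => /Pprime[].
Qed.

Lemma is_ideal_bigcup_chain (F : set (set R)) :
  F `<=` @is_ideal R -> total_on F subset -> F !=set0 ->
  is_ideal (\bigcup_(X in F) X).
Proof.
move=> Fid Ftot [X0 FX0]; split.
- by exists X0 => //; apply: ideal0; exact: Fid.
- move=> x y [X FX Xx] [Y FY Yy].
  case: (Ftot _ _ FX FY) => XY; [exists Y | exists X] => //.
  + by apply: idealD (XY _ Xx) Yy; exact: Fid.
  + by apply: idealD Xx (XY _ Yy); exact: Fid.
- by move=> r x [X FX Xx]; exists X => //; apply: idealMl => //; exact: Fid.
Qed.

Lemma is_prime_ideal_bigcap_chain (J : Type) (F : set J) (Q : J -> set R) :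
  (forall j, F j -> is_prime_ideal (Q j)) ->
  total_on F (fun i j => Q i `<=` Q j) -> F !=set0 ->
  is_prime_ideal (\bigcap_(j in F) Q j).
Proof.
move=> Fp Ftot [j0 Fj0]; split; first split.
- by move=> j /Fp[/ideal0].
- by move=> x y Qx Qy j Fj; apply: idealD; [case: (Fp j Fj)|exact: Qx|exact: Qy].
- by move=> r x Qx j Fj; apply: idealMl; [case: (Fp j Fj)|exact: Qx].
- by move=> /(_ j0 Fj0); case: (Fp j0 Fj0).
move=> a b Qab; apply: contrapT => /not_orP[].
move=> /existsNP[i /not_implyP[Fi Qi'a]] /existsNP[j /not_implyP[Fj Qj'b]].
have [k [Fk Qk'a Qk'b]] : exists k, [/\ F k, ~ Q k a & ~ Q k b].
  by case: (Ftot i j Fi Fj) => sQ; [exists i | exists j]; split=> // /sQ.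
by case: (Fp k Fk) => _ _ /(_ a b (Qab k Fk))[].
Qed.

Definition ideal_adjoin I a : set R := fun z => exists i r, I i /\ z = i + r * a.

Lemma is_ideal_adjoin I a : is_ideal I -> is_ideal (ideal_adjoin I a).
Proof.
move=> Iid; split.
- by exists 0, 0; rewrite mul0r addr0; split=> //; exact: ideal0.
- move=> _ _ [i1 [r1 [Ii1 ->]]] [i2 [r2 [Ii2 ->]]].
  by exists (i1 + i2), (r1 + r2); split; [exact: idealD | ring].
- move=> r _ [i [r1 [Ii ->]]].
  by exists (r * i), (r * r1); split; [exact: idealMl | ring].
Qed.

Lemma ideal_adjoin_sub I a : I `<=` ideal_adjoin I a.
Proof. by move=> z Iz; exists z, 0; rewrite mul0r addr0. Qed.

Lemma ideal_adjoin_mem I a : is_ideal I -> ideal_adjoin I a a.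
Proof. by move=> Iid; exists 0, 1; rewrite add0r mul1r; split=> //; exact: ideal0. Qed.

(* Krull: an ideal maximal among those missing the multiplicative set [S] is prime. *)
Lemma prime_ideal_avoiding (S : set R) :
  S 1 -> ~ S 0 -> (forall x y, S x -> S y -> S (x * y)) ->
  exists Q, is_prime_ideal Q /\ forall s, S s -> ~ Q s.
Proof.
move=> S1 S'0 SM.
pose avoiding := [set I | is_ideal I /\ forall s, S s -> ~ I s].
have avoiding0 : avoiding [set 0].
  split=> [|s Ss /= s0]; last by rewrite s0 in Ss.
  by split=> /= [|_ _ -> ->|r _ ->]; rewrite ?addr0 ?mulr0.
have avoiding_chain F : F `<=` avoiding -> total_on F subset -> F !=set0 ->
    avoiding (\bigcup_(X in F) X).
  move=> Fav Ftot Fn0; split; first by apply: is_ideal_bigcup_chain => // X /Fav[].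
  by move=> s Ss [X /Fav[_ XS']]; apply: XS'.
have [A [[Aid AS'] Amax]] := Zorn_bigcup_nonempty avoiding0 avoiding_chain.
have meetS a : ~ A a -> exists s i r, [/\ S s, A i & s = i + r * a].
  move=> A'a; apply: contrapT => noS; apply: (Amax (ideal_adjoin A a)).
    by split; [exact: ideal_adjoin_sub | move=> /(_ a (ideal_adjoin_mem _ Aid))].
  split; first exact: is_ideal_adjoin.
  by move=> s Ss [i [r [Ai Es]]]; apply: noS; exists s, i, r.
exists A; split=> //; split=> //; first exact: AS'.
move=> a b Aab; apply: contrapT => /not_orP[/meetS[s1 [i1 [r1 [Ss1 Ai1 Es1]]]]].
move=> /meetS[s2 [i2 [r2 [Ss2 Ai2 Es2]]]].
apply: AS' (SM _ _ Ss1 Ss2) _.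
have -> : s1 * s2 = i1 * s2 + (r1 * a * i2 + r1 * r2 * (a * b)).
  by rewrite Es1 Es2; ring.
exact: idealD Aid (idealMr _ Aid Ai1)
  (idealD Aid (idealMl _ Aid Ai2) (idealMl _ Aid Aab)).
Qed.

Lemma minimal_prime_below Q :
  is_prime_ideal Q -> exists P, is_minimal_prime P /\ P `<=` Q.
Proof.
move=> Qprime.
(* Zorn is applied to complements, so that maximal elements give minimal primes. *)
pose compl_prime_below := [set C | is_prime_ideal (~` C) /\ ~` C `<=` Q].
have compl_prime_below0 : compl_prime_below (~` Q).
  by rewrite /compl_prime_below /= setCK; split.
have compl_prime_below_chain F : F `<=` compl_prime_below -> total_on F subset ->
    F !=set0 -> compl_prime_below (\bigcup_(X in F) X).
  move=> Fc Ftot [X0 FX0]; rewrite /compl_prime_below /= setC_bigcup; split.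
    apply: is_prime_ideal_bigcap_chain; last by exists X0.
      by move=> X /Fc[].
    by move=> X Y FX FY; rewrite !setCS; case: (Ftot Y X FY FX); [left|right].
  by move=> x /(_ X0 FX0); apply: (Fc X0 FX0).2.
have [C [[C'prime C'Q] Cmax]] :=
  Zorn_bigcup_nonempty compl_prime_below0 compl_prime_below_chain.
exists (~` C); split=> //; split=> // Q' Q'prime Q'C' x C'x.
apply: contrapT => Q''x; apply: (Cmax (~` Q')).
  by split=> [y Cy Q'y | /(_ x Q''x)//]; exact: Q'C' Q'y Cy.
by rewrite /compl_prime_below /= setCK; split=> // y Q'y; apply/C'Q/Q'C'.
Qed.

Lemma nilpotent_of_in_minimal_primes z :
  (forall P, is_minimal_prime P -> P z) -> exists m, z ^+ m = 0.
Proof.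
move=> zP; apply: contrapT => z_not_nil.
have [Q [Qprime Q'z]] : exists Q, is_prime_ideal Q /\
    forall s, (exists n, s = z ^+ n) -> ~ Q s.
  apply: prime_ideal_avoiding.
  - by exists 0%N; rewrite expr0.
  - by move=> [n zn0]; apply: z_not_nil; exists n.
  - by move=> _ _ [m ->] [n ->]; exists (m + n)%N; rewrite exprD.
have [P [Pmin PQ]] := minimal_prime_below Qprime.
by apply: (Q'z z); [exists 1%N; rewrite expr1 | apply: PQ; exact: zP].
Qed.

(* Minimality: [P] misses the multiplicative set of the [y * u ^+ n] with [y]
   outside [P], otherwise the prime ideal produced by Krull's lemma would lie
   strictly below [P]. *)
Lemma minimal_prime_annihilator P u :
  is_minimal_prime P -> P u -> exists y n, ~ P y /\ y * u ^+ n = 0.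
Proof.
move=> [Pprime Pmin] Pu; apply: contrapT => no_ann.
have [Q [Qprime Q'S]] : exists Q, is_prime_ideal Q /\
    forall s, (exists y n, ~ P y /\ s = y * u ^+ n) -> ~ Q s.
  have [_ P'1 PM] := Pprime.
  apply: prime_ideal_avoiding.
  - by exists 1, 0%N; rewrite mul1r expr0.
  - by move=> [y [n [P'y E]]]; apply: no_ann; exists y, n.
  - move=> _ _ [y1 [n1 [P'y1 ->]]] [y2 [n2 [P'y2 ->]]].
    exists (y1 * y2), (n1 + n2)%N; split; last by rewrite exprD; ring.
    by case/PM.
have QP : Q `<=` P.
  move=> x Qx; apply: contrapT => P'x; apply: (Q'S x) => //.
  by exists x, 0%N; rewrite expr0 mulr1.
apply: (Q'S u); last exact: Pmin.
by exists 1, 1%N; rewrite expr1 mul1r; split=> //; case: Pprime.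
Qed.

Lemma one_sub_nilpotent_inv z m : z ^+ m = 0 -> exists w, (1 - z) * w = 1.
Proof.
move=> zm0; exists (\sum_(i < m) z ^+ i).
by rewrite -opprB mulNr -subrX1 zm0 sub0r opprK.
Qed.

End Ideals.

Section BezoutRings.
Variable R : comPzRingType.
Implicit Types (P : set R) (s : seq R) (a b d g h u v w x y z : R).

Lemma fg_ideal2 a b x : fg_ideal [:: a; b] x <-> exists c0 c1, x = c0 * a + c1 * b.
Proof.
rewrite /fg_ideal /=; split=> [[c ->]|[c0 [c1 ->]]].
  by exists (c ord0), (c (lift ord0 ord0)); rewrite !big_ord_recl big_ord0 addr0.
exists (fun i : 'I_2 => if val i == 0%N then c0 else c1).
by rewrite !big_ord_recl big_ord0 addr0.
Qed.

Lemma fg_ideal2T a b c0 c1 : c0 * a + c1 * b = 1 -> forall x, fg_ideal [:: a; b] x.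
Proof.
by move=> E x; apply/fg_ideal2; exists (x * c0), (x * c1); rewrite -!mulrA -mulrDr E mulr1.
Qed.

Lemma fg_ideal_mem s y : y \in s -> fg_ideal s y.
Proof.
move=> ys; have ks : (index y s < size s)%N by rewrite index_mem.
exists (fun i => (val i == index y s)%:R).
rewrite (bigD1 (Ordinal ks)) //= eqxx mul1r nth_index // big1 ?addr0 // => i ik.
by rewrite (_ : val i == _ = false) ?mul0r //; apply: contraNF ik => /eqP ik; apply/eqP/val_inj.
Qed.

Lemma fg_ideal_annihilated s z x :
  (forall y, y \in s -> y * z = 0) -> fg_ideal s x -> x * z = 0.
Proof.
by move=> sz [c ->]; rewrite mulr_suml big1 // => i _; rewrite -mulrA sz ?mulr0 ?mem_nth.
Qed.

Lemma common_annihilating_power s u :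
  (forall y, y \in s -> exists n, y * u ^+ n = 0) ->
  exists N, forall y, y \in s -> y * u ^+ N = 0.
Proof.
elim: s => [|y0 s IHs] ann; first by exists 0%N.
have [n0 y0n0] := ann y0 (mem_head _ _).
have [N sN] := IHs (fun y ys => ann y (mem_behead (s := y0 :: s) ys)).
exists (n0 + N)%N => y; rewrite inE exprD mulrA => /predU1P[->|ys].
  by rewrite y0n0 mul0r.
by rewrite mulrAC sN ?mul0r.
Qed.

Lemma Bezout_pair : Bezout_ring R -> forall a b,
  exists d u v a1 b1, [/\ d = u * a + v * b, a = a1 * d & b = b1 * d].
Proof.
move=> Bez a b; have [d abd] := Bez [:: a; b].
have [u [v Ed]] : exists u v, d = u * a + v * b.
  by apply/fg_ideal2/abd; exists 1; rewrite mul1r.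
have [a1 Ea] : principal_ideal d a by apply/abd/fg_ideal_mem; rewrite inE eqxx.
have [b1 Eb] : principal_ideal d b by apply/abd/fg_ideal_mem; rewrite !inE eqxx orbT.
by exists d, u, v, a1, b1.
Qed.

Lemma minimal_primes_finite_annihilators u : minspec_compact R ->
  exists s, (forall y, y \in s -> exists n, y * u ^+ n = 0) /\
    forall P, is_minimal_prime P -> P u -> exists2 y, y \in s & ~ P y.
Proof.
move=> Cpt.
pose good y := y = u \/ exists n, y * u ^+ n = 0.
pose U (i : {y | good y}) P := is_minimal_prime P /\ exists a, a = sval i /\ ~ P a.
have U_open i : minspec_open (U i) by exists (fun a => a = sval i).
have U_cover P : is_minimal_prime P -> exists i, U i P.
  move=> Pmin; have [Pu|P'u] := pselect (P u).
    have [y [n [P'y yun]]] := minimal_prime_annihilator Pmin Pu.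
    by exists (exist good y (or_intror (ex_intro _ n yun))); split=> //; exists y.
  by exists (exist good u (or_introl erefl)); split=> //; exists u.
have [n [F subcover]] := Cpt _ U U_open U_cover.
exists [seq y <- [seq sval (F k) | k <- iota 0 n] | y != u]; split.
  move=> y; rewrite mem_filter => /andP[y'u /mapP[k _ Ey]].
  by rewrite Ey in y'u *; case: (svalP (F k)) y'u => [->|//]; rewrite eqxx.
move=> P Pmin Pu; have [k kn [_ [y [-> P'y]]]] := subcover P Pmin.
exists (sval (F k)) => //; rewrite mem_filter; apply/andP; split.
  by apply: contraPneq P'y => ->.
by apply: map_f; rewrite mem_iota.
Qed.

(* Compactness reduces to finitely many annihilators of powers of [u], and the
   Bezout property merges them into their generator [g]. *)
Lemma minimal_primes_separator u : Bezout_ring R -> minspec_compact R ->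
  exists g N, g * u ^+ N = 0 /\ forall P, is_minimal_prime P -> P u -> ~ P g.
Proof.
move=> Bez Cpt; have [s [s_ann sP]] := minimal_primes_finite_annihilators u Cpt.
have [N sN] := common_annihilating_power s_ann.
have [g sg] := Bez s.
exists g, N; split.
  by apply: fg_ideal_annihilated sN _; apply/sg; exists 1; rewrite mul1r.
move=> P Pmin Pu Pg; have [y ys P'y] := sP P Pmin Pu.
have [r Ey] : principal_ideal g y by apply/sg/fg_ideal_mem.
by apply: P'y; rewrite Ey; apply: idealMl Pg; case: Pmin => [[]].
Qed.

(* If [u] lies in [P], both would force [w] into [P]; otherwise [g] lies in
   [P], and both would force [u] into [P]. *)
Lemma shift_avoiding_minimal_primes u v w c0 c1 :
  Bezout_ring R -> minspec_compact R -> c0 * u + c1 * v + w = 1 ->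
  exists g, forall P, is_minimal_prime P -> ~ (P (u + w * g) /\ P v).
Proof.
move=> Bez Cpt Euvw; have [g [N [gu0 sep]]] := minimal_primes_separator u Bez Cpt.
exists g => P Pmin [Px Pv]; have [[Pid P'1 PM] _] := Pmin.
have [Pu|P'u] := pselect (P u).
  have /PM[Pw|Pg] : P (w * g).
    by rewrite (_ : w * g = u + w * g - u); [exact: idealB | ring].
    apply: P'1; rewrite -Euvw.
    exact: idealD Pid (idealD Pid (idealMl _ Pid Pu) (idealMl _ Pid Pv)) Pw.
  exact: sep P Pmin Pu Pg.
have Pg : P g.
  have /PM[//|/prime_idealX Pu] : P (g * u ^+ N) by rewrite gu0; exact: ideal0.
  by case: P'u; apply: Pu; case: Pmin.
apply: P'u; rewrite (_ : u = u + w * g - w * g); last by ring.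
exact: idealB (idealMl _ Pid Pg).
Qed.

(* [h] lies in no minimal prime, so [1 - (rho x0 + sig y0)], which kills [h],
   is nilpotent. *)
Lemma comaximal_cofactors x v h rho sig x0 y0 :
  h = rho * x + sig * v -> x = x0 * h -> v = y0 * h ->
  (forall P, is_minimal_prime P -> ~ (P x /\ P v)) ->
  exists p q, p * x0 + q * y0 = 1.
Proof.
move=> Eh Ex Ev xv_avoid; pose k := 1 - (rho * x0 + sig * y0).
have hk0 : h * k = 0.
  rewrite (_ : h * k = h - (rho * (x0 * h) + sig * (y0 * h))); last by rewrite /k; ring.
  by rewrite -Ex -Ev -Eh subrr.
have kP P : is_minimal_prime P -> P k.
  move=> Pmin; have [[Pid _ PM] _] := Pmin.
  have /PM[Ph|//] : P (h * k) by rewrite hk0; exact: ideal0.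
  by case: (xv_avoid P Pmin); rewrite Ex Ev; split; apply: idealMl.
have [m km0] := nilpotent_of_in_minimal_primes kP.
have [c kc] := one_sub_nilpotent_inv km0.
by exists (c * rho), (c * sig); rewrite -kc /k; ring.
Qed.

End BezoutRings.

Lemma hermite_factorization (R : comPzRingType) (a b x0 y0 p q alpha beta : R) :
  p * x0 + q * y0 = 1 ->
  a = alpha * (x0 * a + y0 * b) -> b = beta * (x0 * a + y0 * b) ->
  exists a' b', [/\ a = (x0 * a + y0 * b) * a', b = (x0 * a + y0 * b) * b'
                  & x0 * a' + y0 * b' = 1].
Proof.
(* Moving (p, q) along (y0, -x0) keeps x0 p + y0 q = 1; [delta] is the step
   for which d * a' = a (p x0 + q y0) and d * b' = b (p x0 + q y0). *)
set d := x0 * a + y0 * b => Hpq Ea Eb; pose delta := q * alpha - p * beta.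
exists (p + y0 * delta), (q - x0 * delta); split.
- rewrite (_ : d * _ = d * p + y0 * (q * (alpha * d) - p * (beta * d))).
    by rewrite -Ea -Eb /d -[LHS]mulr1 -Hpq; ring.
  by rewrite /delta; ring.
- rewrite (_ : d * _ = d * q - x0 * (q * (alpha * d) - p * (beta * d))).
    by rewrite -Ea -Eb /d -[LHS]mulr1 -Hpq; ring.
  by rewrite /delta; ring.
- by rewrite -Hpq; ring.
Qed.

Theorem theorem3p3 (R : comPzRingType) :
  Bezout_ring R -> minspec_compact R -> Hermite_ring R.
Proof.
move=> Bez Cpt a b.
have [d [u [v [a1 [b1 [Ed Ea Eb]]]]]] := Bezout_pair Bez a b.
pose t := 1 - (a1 * u + b1 * v).
have Et : a1 * u + b1 * v + t = 1 by rewrite addrC subrK.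
have [g xv_avoid] := shift_avoiding_minimal_primes Bez Cpt Et.
pose x := u + t * g.
have td0 : t * d = 0.
  rewrite (_ : t * d = d - (u * (a1 * d) + v * (b1 * d))); first by rewrite -Ea -Eb -Ed subrr.
  by rewrite /t; ring.
have Ed' : d = x * a + v * b.
  rewrite (_ : x * a = u * a + g * a1 * (t * d)); last by rewrite /x Ea; ring.
  by rewrite td0 mulr0 addr0.
have [h [rho [sig [x0 [y0 [Eh Ex Ev]]]]]] := Bezout_pair Bez x v.
have [p [q Hpq]] := comaximal_cofactors Eh Ex Ev xv_avoid.
have Ed0 : d = h * (x0 * a + y0 * b) by rewrite Ed' {1}Ex {1}Ev; ring.
have Ea0 : a = a1 * h * (x0 * a + y0 * b) by rewrite {1}Ea {1}Ed0 mulrA.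
have Eb0 : b = b1 * h * (x0 * a + y0 * b) by rewrite {1}Eb {1}Ed0 mulrA.
have [a' [b' [Ea' Eb' Hab']]] := hermite_factorization Hpq Ea0 Eb0.
by exists (x0 * a + y0 * b), a', b'; split=> //; apply: fg_ideal2T Hab'.
Qed.
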